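(* Let $\Delta$ be an even natural number, and for $j=1,2,\dots$ let $G_j$ be a graph on $n_j$ vertices with $n_j\to\infty$, of maximum degree $\Delta$, such that the number $z_j$ of vertices of $G_j$ of degree smaller than $\Delta$ satisfies $z_j=o(n_j)$. Then $\limsup_{j\to\infty}\alpha_{\mathrm{od}}(G_j)/n_j\le\frac{\Delta-1}{2\Delta-1}$.
   Context: An odd independent set in $G=(V,E)$ is an independent set $S$ such that every $v\in V\setminus S$ has either no neighbor or an odd number of neighbors in $S$; $\alpha_{\mathrm{od}}(G)$ is its maximum size. *)

From HB Require Import structures.
From mathcomp Require Import all_boot all_order all_algebra.
From mathcomp Require Import all_classical all_reals all_analysis.
Set Implicit Arguments. Unset Strict Implicit. Unset Printing Implicit Defensive.

Definition simple_graph (T : finType) (e : rel T) : Prop :=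
  symmetric e /\ irreflexive e.

Definition nbhd (T : finType) (e : rel T) (v : T) : {set T} := [set u | e v u].
Definition deg (T : finType) (e : rel T) (v : T) : nat := #|nbhd e v|.

Definition independent (T : finType) (e : rel T) (S : {set T}) : bool :=
  [forall u in S, forall v in S, ~~ e u v].

Definition odd_independent (T : finType) (e : rel T) (S : {set T}) : bool :=
  independent e S &&
  [forall v in ~: S, (#|nbhd e v :&: S| == 0%N) || odd #|nbhd e v :&: S|].

Definition alpha_od (T : finType) (e : rel T) : nat :=
  \max_(S : {set T} | odd_independent e S) #|S|.

Definition max_degree_eq (T : finType) (e : rel T) (D : nat) : Prop :=
  (forall v, deg e v <= D)%N /\ exists v, deg e v = D.

Definition n_low (T : finType) (e : rel T) (D : nat) : nat :=
  #|[set v | (deg e v < D)%N]|.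

(* Count the edges between an odd independent set S and its complement.
   Since S is independent, every vertex of S of full degree D contributes D
   of them.  A vertex outside S receives an odd number of them (or none),
   at most D, hence at most D - 1 because D is even.  With z vertices of
   degree below D this gives D (|S| - z) <= (D - 1) (n - |S|), that is
   |S| / n <= (D - 1) / (2D - 1) + D / (2D - 1) * z / n, and z / n -> 0. *)
From HB Require Import structures.
From mathcomp Require Import all_boot all_order all_algebra.
From mathcomp Require Import all_classical all_reals all_analysis.
From mathcomp Require Import ring lra zify.
Set Implicit Arguments. Unset Strict Implicit. Unset Printing Implicit Defensive.
Import Order.TTheory GRing.Theory Num.Theory.
Import numFieldNormedType.Exports.
Local Open Scope classical_set_scope.
Local Open Scope ring_scope.

Section OddIndependentCount.
Local Open Scope nat_scope.
Variables (T : finType) (e : rel T).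

Lemma card_nbhdI (v : T) (S : {set T}) :
  #|nbhd e v :&: S| = \sum_(u in S) e v u.
Proof.
rewrite -sum1_card big_mkcond [RHS]big_mkcond /=; apply: eq_bigr => u _.
by rewrite !inE andbC; case: (u \in S); case: (e v u).
Qed.

Lemma odd_independent_set0 : odd_independent e finset.set0.
Proof.
apply/andP; split; first by apply/forallP => u; rewrite inE.
by apply/forallP => v; apply/implyP => _; rewrite finset.setI0 cards0.
Qed.

Lemma alpha_od_attained :
  exists2 S, odd_independent e S & #|S| = alpha_od e.
Proof.
have S0 : 0 < #|[pred S : {set T} | odd_independent e S]|.
  by apply/card_gt0P; exists finset.set0; exact: odd_independent_set0.
have [S oiS maxS] := eq_bigmax_cond (fun S : {set T} => #|S|) S0.
by exists S => //; rewrite /alpha_od maxS.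
Qed.

Lemma alpha_od_le_card : alpha_od e <= #|T|.
Proof. by apply/bigmax_leqP => S _; exact: max_card. Qed.

Lemma mul_card_le_sum_deg (D : nat) (S : {set T}) :
  D * #|S| <= \sum_(v in S) deg e v + D * n_low e D.
Proof.
have lowS : \sum_(v in S) (deg e v < D) <= n_low e D.
  have -> : n_low e D = \sum_v (deg e v < D).
    by rewrite /n_low -sum1_card big_mkcond; apply: eq_bigr => v _; rewrite inE; case: (_ < _).
  by rewrite [X in _ <= X](bigID (mem S)) leq_addr.
apply: leq_trans (leq_add (leqnn _) (leq_mul (leqnn D) lowS)).
rewrite -sum1_card !big_distrr -big_split /=; apply: leq_sum => v _.
by case: ltnP => degv; rewrite ?muln1 ?muln0 ?addn0 // leq_addl.
Qed.

Hypothesis e_sym : symmetric e.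

Lemma independent_sum_deg (S : {set T}) : independent e S ->
  \sum_(v in S) deg e v = \sum_(u in ~: S) #|nbhd e u :&: S|.
Proof.
move=> /forallP indS.
transitivity (\sum_(v in S) \sum_(u in ~: S) (e v u : nat)).
  apply: eq_bigr => v vS.
  rewrite /deg -[nbhd e v]finset.setIT card_nbhdI (bigID (mem S)) /= big1 ?add0n.
    by apply: eq_bigl => u; rewrite !inE.
  move=> u /andP [_ uS]; move: (indS v); rewrite vS => /forallP/(_ u).
  by rewrite uS => /negbTE ->.
rewrite exchange_big /=; apply: eq_bigr => u _; rewrite card_nbhdI.
by apply: eq_bigr => v _; rewrite e_sym.
Qed.

Variable D : nat.
Hypotheses (D_even : ~~ odd D) (deg_le : forall v, deg e v <= D).

Lemma odd_independent_nbhdI_le (S : {set T}) (u : T) :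
  odd_independent e S -> u \notin S -> #|nbhd e u :&: S| <= D.-1.
Proof.
case/andP=> _ /forallP/(_ u); rewrite inE => /implyP oddS /oddS.
case/orP=> [/eqP -> // | oddN].
have lt_D : #|nbhd e u :&: S| < D.
  rewrite ltn_neqAle; apply/andP; split; first by apply: contraNneq D_even => <-.
  by apply: leq_trans (deg_le u); rewrite subset_leq_card ?subsetIl.
by rewrite -ltnS (ltn_predK lt_D).
Qed.

Lemma odd_independent_card_le (S : {set T}) : odd_independent e S ->
  (D + D.-1) * #|S| <= D.-1 * #|T| + D * n_low e D.
Proof.
move=> oiS; have /andP [indS _] := oiS.
have outS : \sum_(u in ~: S) #|nbhd e u :&: S| <= D.-1 * #|~: S|.
  rewrite -sum1_card big_distrr /= muln1; apply: leq_sum => u.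
  by rewrite inE; exact: odd_independent_nbhdI_le.
have := mul_card_le_sum_deg D S; rewrite independent_sum_deg //.
have := cardsC S; nia.
Qed.

Lemma alpha_od_le : (D + D.-1) * alpha_od e <= D.-1 * #|T| + D * n_low e D.
Proof. by have [S /odd_independent_card_le + <-] := alpha_od_attained. Qed.

End OddIndependentCount.

Lemma ratio_le_of_mul_le (R : realFieldType) (d a n z : R) :
  1 <= d -> 0 <= n -> (2 * d - 1) * a <= (d - 1) * n + d * z ->
  a / n <= (d - 1) / (2 * d - 1) + d / (2 * d - 1) * (z / n).
Proof.
move=> d1 n0 le_an; have d2 : 0 < 2 * d - 1 by rewrite subr_gt0; lra.
have [-> | n_gt0] := eqVneq n 0.
  by rewrite !invr0 !mulr0 addr0 divr_ge0 ?(ltW d2) // subr_ge0.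
have {}n_gt0 : 0 < n by rewrite lt_def n_gt0.
rewrite -subr_ge0.
have -> : (d - 1) / (2 * d - 1) + d / (2 * d - 1) * (z / n) - a / n
    = ((d - 1) * n + d * z - (2 * d - 1) * a) / ((2 * d - 1) * n).
  by field; rewrite !gt_eqF.
by rewrite divr_ge0 ?subr_ge0 // mulr_ge0 // ltW.
Qed.

Lemma alpha_od_ratio_le (R : realFieldType) (T : finType) (e : rel T) (D : nat) :
  symmetric e -> ~~ odd D -> (forall v, (deg e v <= D)%N) ->
  (alpha_od e)%:R / #|T|%:R <= (D%:R - 1) / (2 * D%:R - 1)
    + D%:R / (2 * D%:R - 1) * ((n_low e D)%:R / #|T|%:R) :> R.
Proof.
move=> e_sym D_even deg_le; case: D D_even deg_le => [|d] D_even deg_le.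
  (* For D = 0 the bound is (0 - 1) / (0 - 1) = 1. *)
  rewrite mulr0 !mul0r sub0r addr0 divrr ?unitrN ?unitr1 //.
  have [-> | T_gt0] := posnP #|T|; first by rewrite invr0 mulr0.
  by rewrite ler_pdivrMr ?ltr0n // mul1r ler_nat alpha_od_le_card.
apply: ratio_le_of_mul_le; rewrite ?ler1n ?ler0n //.
have -> : d.+1%:R - 1 = d%:R :> R by rewrite -addn1 natrD addrK.
have -> : 2 * d.+1%:R - 1 = (d.+1 + d)%:R :> R by rewrite natrD -addn1 natrD; ring.
by rewrite -!natrM -natrD ler_nat; exact: alpha_od_le.
Qed.

Lemma le_limn_esup (R : realType) (u v : (\bar R)^nat) :
  (forall j, (u j <= v j)%E) -> (limn_esup u <= limn_esup v)%E.
Proof.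
move=> le_uv; rewrite !limn_esup_lim.
apply: lee_lim; [exact: is_cvg_esups | exact: is_cvg_esups | apply: nearW => m].
apply: ge_ereal_sup => _ [k /= km <-].
by apply: le_trans (le_uv k) _; apply: ereal_sup_ubound; exists k.
Qed.

Theorem proposition4 (R : realType) (D : nat) (n : nat -> nat)
    (e : forall j, rel 'I_(n j)) :
  ~~ odd D ->
  (forall j, simple_graph (e j)) ->
  (forall M : nat, \forall j \near \oo, (M <= n j)%N) ->
  (forall j, max_degree_eq (e j) D) ->
  (fun j => (n_low (e j) D)%:R / (n j)%:R : R) @ \oo --> 0 ->
  (limn_esup (fun j => ((alpha_od (e j))%:R / (n j)%:R : R)%:E)
     <= ((D%:R - 1) / (2 * D%:R - 1) : R)%:E)%E.
Proof.
move=> D_even simple _ max_deg low_cvg0.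
set c := (D%:R - 1) / (2 * D%:R - 1) : R; set K := D%:R / (2 * D%:R - 1) : R.
set r := fun j => _ in low_cvg0.
have bound_cvg : (fun j => (c + K * r j)%:E) @ \oo --> c%:E.
  apply: cvg_EFin; first exact: nearW.
  have : (fun j => c + K * r j) @ \oo --> c + K * 0.
    by apply: cvgD; [exact: cvg_cst | exact: cvgM (cvg_cst K) low_cvg0].
  by rewrite mulr0 addr0.
rewrite -(cvg_limn_einf_sup bound_cvg).2; apply: le_limn_esup => j.
have := alpha_od_ratio_le R (simple j).1 D_even (max_deg j).1.
by rewrite card_ord lee_fin.
Qed.
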